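(* Let $d\ge2$ and let $A,B$ be $d$-dimensional systems, with $\{\Phi^y_{AB}\}_{y=1}^{d^2}$ the $d^2$ qudit Bell states (an orthonormal basis of maximally entangled pure states, as projectors). The POVM $\{P^y_{AB}\}_{y=1}^{d^2}$ with $P^y_{AB}=\frac12\Phi^y_{AB}+\frac{1}{2d^2}I_{AB}$ is two-extendible, with two-extension $G^{y,y'}_{ABE}=\frac{1}{2d^2}\Phi^y_{AB}\otimes I_E+\frac{1}{2d^2}\Phi^{y'}_{AE}\otimes I_B$, $y,y'\in\{1,\dots,d^2\}$; but it does not belong to $\operatorname{1WL}$ (its elements do not have positive partial transpose).
   Context: A bipartite POVM $\{P^y_{AB}\}_{y\in\mathcal{Y}}$ is two-extendible if there exists a POVM $\{G^{y,y'}_{ABE}\}_{y,y'\in\mathcal{Y}}$ on $ABE$, with $E\cong B$, such that $\sum_{y'}G^{y,y'}_{ABE}=P^y_{AB}\otimes I_E$ for all $y$ and $F_{BE}G^{y,y'}_{ABE}F_{BE}^\dagger=G^{y',y}_{ABE}$ for all $y,y'$, where $F_{BE}$ is the swap unitary. A POVM is in $\operatorname{1WL}$ if $P^y_{AB}=\sum_{x}E^x_A\otimes F^{x,y}_B$ for a POVM $\{E^x_A\}_x$ and POVMs $\{F^{x,y}_B\}_y$ for each $x$. *)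

From mathcomp Require Import all_boot all_order all_algebra algC.
Set Implicit Arguments. Unset Strict Implicit. Unset Printing Implicit Defensive.
Import Order.TTheory GRing.Theory Num.Theory.
Local Open Scope ring_scope.

Definition op (T : finType) := T -> T -> algC.

Definition psd (T : finType) (M : op T) : Prop :=
  forall v : T -> algC, 0 <= \sum_i \sum_j (v i)^* * M i j * v j.

Definition idop (T : finType) : op T := fun i j => (i == j)%:R.

Definition is_POVM (T Y : finType) (P : Y -> op T) : Prop :=
  (forall y, psd (P y)) /\ (forall i j, \sum_y P y i j = idop i j).

Definition tens (S T : finType) (M : op S) (N : op T) : op (S * T)%type :=
  fun i j => M i.1 j.1 * N i.2 j.2.

Definition ptrans2 (S T : finType) (M : op (S * T)%type) : op (S * T)%type :=
  fun i j => M (i.1, j.2) (j.1, i.2).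

(* Conjugation by the swap unitary F_{BE} on A B E (labels ((a,b),e)). *)
Definition swapBE (S T : finType) (M : op (S * T * T)%type) : op (S * T * T)%type :=
  fun i j => M (i.1.1, i.2, i.1.2) (j.1.1, j.2, j.1.2).

(* An operator M_{AE} on A E, viewed as M_{AE} ⊗ I_B on A B E. *)
Definition embAE (S T : finType) (M : op (S * T)%type) : op (S * T * T)%type :=
  fun i j => M (i.1.1, i.2) (j.1.1, j.2) * (i.1.2 == j.1.2)%:R.

Definition two_extension (S T Y : finType) (P : Y -> op (S * T)%type)
    (G : Y -> Y -> op (S * T * T)%type) : Prop :=
  is_POVM (fun yy : (Y * Y)%type => G yy.1 yy.2) /\
  (forall y i j, \sum_y' G y y' i j = tens (P y) (@idop T) i j) /\
  (forall y y' i j, swapBE (G y y') i j = G y' y i j).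

Definition two_extendible (S T Y : finType) (P : Y -> op (S * T)%type) : Prop :=
  exists G, two_extension P G.

Definition in_1WL (S T Y : finType) (P : Y -> op (S * T)%type) : Prop :=
  exists (X : finType) (E : X -> op S) (F : X -> Y -> op T),
    is_POVM E /\ (forall x, is_POVM (F x)) /\
    (forall y i j, P y i j = \sum_x E x i.1 j.1 * F x y i.2 j.2).

(* Qudit Bell states, labelled y = (p,q) : 'I_d * 'I_d (d^2 of them):
   |Phi_{p,q}> = (X^p Z^q ⊗ I) (1/sqrt d) sum_i |i,i>, w primitive d-th root,
   i.e. component at (a,b) is [a = b + p mod d] w^(q b) / sqrt d. *)
Definition bell_vec (d : nat) (w : algC) (y : ('I_d * 'I_d)%type) : 'I_d * 'I_d -> algC :=
  fun r => ((r.1 : nat) == (r.2 + y.1) %% d)%N%:R * w ^+ (y.2 * r.2) / sqrtC d%:R.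

Definition bell (d : nat) (w : algC) (y : ('I_d * 'I_d)%type) : op ('I_d * 'I_d)%type :=
  fun r s => bell_vec w y r * (bell_vec w y s)^*.

Definition Pbell (d : nat) (w : algC) (y : ('I_d * 'I_d)%type) : op ('I_d * 'I_d)%type :=
  fun r s => 2^-1 * bell w y r s + (2 * (d ^ 2)%:R)^-1 * idop r s.

Definition Gbell (d : nat) (w : algC) (y y' : ('I_d * 'I_d)%type)
    : op ('I_d * 'I_d * 'I_d)%type :=
  fun i j => (2 * (d ^ 2)%:R)^-1 * tens (bell w y) (@idop 'I_d) i j
           + (2 * (d ^ 2)%:R)^-1 * embAE (bell w y') i j.

Arguments bell_vec d w y r : clear implicits.
Arguments bell d w y r s : clear implicits.
Arguments Pbell d w y r s : clear implicits.
Arguments Gbell d w y y' i j : clear implicits.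

(* Two-extendibility is a computation with the completeness relation
   sum_y Phi^y = I of the Bell basis: it gives the POVM identities of P and G and
   the marginal condition, while the swap F_BE just exchanges the two summands of G.
   On the span of |1+p, 0> and |p, 1>, the partial transpose of P^(p,q) takes the
   value 1/d^2 - 1/d < 0 at the vector (1, -conj(w^q)), so P^(p,q) is not PPT.
   For an element of 1WL, the partial transpose of P^y is sum_x E^x (x) (F^(x,y))^T,
   and each 2x2 principal compression of E (x) F^T is the Schur product of two PSD
   2x2 matrices, hence PSD; this rules out the same compression. *)

From mathcomp Require Import all_boot all_order all_algebra algC.
From mathcomp Require Import ring.
Import Order.TTheory GRing.Theory Num.Theory.
Local Open Scope ring_scope.
Set Implicit Arguments. Unset Strict Implicit. Unset Printing Implicit Defensive.

Lemma ge0_conjC (z : algC) : 0 <= z -> z^* = z.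
Proof. by move=> z_ge0; apply/conj_Creal/ger0_real. Qed.

Lemma sum_delta_mull (T : finType) (h : T -> algC) (i : T) :
  \sum_k (k == i)%:R * h k = h i.
Proof.
by rewrite (bigD1 i) //= eqxx mul1r big1 ?addr0 // => k /negbTE ->; rewrite mul0r.
Qed.

Section PositiveSemidefinite.

Variable T : finType.
Implicit Types (M N : op T) (i j : T).

Lemma eq_psd M N : (forall i j, M i j = N i j) -> psd N -> psd M.
Proof.
move=> eMN psdN v; have := psdN v; congr (_ <= _).
by apply: eq_bigr => i _; apply: eq_bigr => j _; rewrite eMN.
Qed.

Lemma psd_gram (K : finType) (u : K -> T -> algC) :
  psd (fun i j => \sum_k u k i * (u k j)^*).
Proof.
move=> v.
have -> : \sum_i \sum_j (v i)^* * (\sum_k u k i * (u k j)^*) * v j =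
          \sum_k (\sum_i (v i)^* * u k i) * (\sum_i (v i)^* * u k i)^*.
  transitivity (\sum_k \sum_i \sum_j (v i)^* * u k i * ((v j)^* * u k j)^*).
    rewrite [RHS]exchange_big /=; apply: eq_bigr => i _.
    rewrite [RHS]exchange_big /=; apply: eq_bigr => j _.
    rewrite mulr_sumr mulr_suml; apply: eq_bigr => k _.
    rewrite rmorphM /= conjCK; ring.
  apply: eq_bigr => k _; rewrite mulr_suml; apply: eq_bigr => i _.
  by rewrite rmorph_sum mulr_sumr.
by apply: sumr_ge0 => k _; apply: mul_conjC_ge0.
Qed.

Lemma psd_conic (a b : algC) M N :
  0 <= a -> 0 <= b -> psd M -> psd N -> psd (fun i j => a * M i j + b * N i j).
Proof.
move=> a_ge0 b_ge0 psdM psdN v.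
have -> : \sum_i \sum_j (v i)^* * (a * M i j + b * N i j) * v j =
    a * (\sum_i \sum_j (v i)^* * M i j * v j)
  + b * (\sum_i \sum_j (v i)^* * N i j * v j).
  rewrite !mulr_sumr -big_split; apply: eq_bigr => i _.
  rewrite !mulr_sumr -big_split; apply: eq_bigr => j _ /=; ring.
by apply: addr_ge0; apply: mulr_ge0.
Qed.

Lemma psd_block_rank1 (E : finType) (f : T -> algC) (g : T -> E) :
  psd (fun i j => f i * (f j)^* * (g i == g j)%:R).
Proof.
apply: eq_psd (psd_gram (fun e i => f i * (g i == e)%:R)) => i j.
rewrite -(sum_delta_mull (fun e => f i * (f j)^* * (g i == e)%:R) (g j)).
apply: eq_bigr => e _.
by rewrite rmorphM /= conjC_nat eq_sym; ring.
Qed.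

Lemma psd_idop : psd (@idop T).
Proof.
apply: eq_psd (psd_block_rank1 (fun=> 1) id) => i j.
by rewrite conjC1 !mul1r.
Qed.

End PositiveSemidefinite.

Lemma eq_by_difference (a b c d : algC) : a = b -> c - d = a - b -> c = d.
Proof. by move=> ab e; apply/eqP; rewrite -subr_eq0 e ab subrr. Qed.

Section Compression2.

Variable T : finType.
Implicit Types (M : op T) (i j : T).

Definition qform2 M i j (x1 x2 : algC) :=
  x1^* * M i i * x1 + x1^* * M i j * x2 + x2^* * M j i * x1 + x2^* * M j j * x2.

Definition psd_at M i j := forall x1 x2, 0 <= qform2 M i j x1 x2.

Lemma eq_psd_at M N i j :
  (forall r s, M r s = N r s) -> psd_at N i j -> psd_at M i j.
Proof. by move=> eMN psdN x1 x2; rewrite /qform2 !eMN; apply: psdN. Qed.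

Lemma sum_delta2_mull (a b : algC) (h : T -> algC) i j :
  \sum_k ((k == i)%:R * a + (k == j)%:R * b) * h k = a * h i + b * h j.
Proof.
rewrite -(sum_delta_mull (fun k => a * h k) i) -(sum_delta_mull (fun k => b * h k) j).
by rewrite -big_split; apply: eq_bigr => k _ /=; ring.
Qed.

Lemma psd_psd_at M i j : psd M -> psd_at M i j.
Proof.
move=> psdM x1 x2; have := psdM (fun k => (k == i)%:R * x1 + (k == j)%:R * x2).
have -> : \sum_k \sum_l ((k == i)%:R * x1 + (k == j)%:R * x2)^* * M k l *
            ((l == i)%:R * x1 + (l == j)%:R * x2) =
          \sum_k ((k == i)%:R * x1^* + (k == j)%:R * x2^*) *
            (\sum_l ((l == i)%:R * x1 + (l == j)%:R * x2) * M k l).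
  apply: eq_bigr => k _; rewrite mulr_sumr; apply: eq_bigr => l _.
  by rewrite rmorphD !rmorphM /= !conjC_nat; ring.
under eq_bigr do rewrite sum_delta2_mull.
by rewrite sum_delta2_mull /qform2; congr (_ <= _); ring.
Qed.

Lemma psd_at_sum (X : finType) (M : X -> op T) i j :
  (forall x, psd_at (M x) i j) -> psd_at (fun r s => \sum_x M x r s) i j.
Proof.
move=> psdM x1 x2; rewrite /qform2 !mulr_sumr !mulr_suml -!big_split /=.
by apply: sumr_ge0 => x _; apply: psdM.
Qed.

Lemma psd_at_tr M i j : psd_at M i j -> psd_at (fun r s => M s r) i j.
Proof.
move=> psdM x1 x2; have := psdM x1^* x2^*; congr (_ <= _).
by rewrite /qform2 !conjCK; ring.
Qed.

Lemma psd_at_herm M i j :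
  psd_at M i j -> [/\ 0 <= M i i, 0 <= M j j & M j i = (M i j)^*].
Proof.
move=> psdM.
have Mii_ge0 : 0 <= M i i.
  have := psdM 1 0.
  by rewrite /qform2 conjC1 conjC0 !(mul0r, mulr0, mul1r, mulr1, addr0).
have Mjj_ge0 : 0 <= M j j.
  have := psdM 0 1.
  by rewrite /qform2 conjC1 conjC0 !(mul0r, mulr0, mul1r, mulr1, add0r).
(* the quadratic form is real, so equals its conjugate; test it at (1, c) *)
have real_at c : M i j * c + c^* * M j i = (M i j)^* * c^* + c * (M j i)^*.
  have := ge0_conjC (psdM 1 c).
  rewrite /qform2 !rmorphD !rmorphM /= !conjCK conjC1.
  rewrite (ge0_conjC Mii_ge0) (ge0_conjC Mjj_ge0).
  by move/esym=> e; apply: eq_by_difference e _; ring.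
have e1 := real_at 1; have ei := real_at 'i; rewrite conjC1 in e1; rewrite conjCi in ei.
have ei' : M i j - M j i = (M j i)^* - (M i j)^*.
  by apply: (mulfI (neq0Ci algC)); apply: eq_by_difference ei _; ring.
rewrite !(mulr1, mul1r) in e1.
have two_neq0 : 2 != 0 :> algC by rewrite pnatr_eq0.
split=> //; apply: (mulfI two_neq0).
have -> : 2 * M j i = M i j + M j i - (M i j - M j i) by ring.
by rewrite e1 ei'; ring.
Qed.

Lemma psd_at_det M i j : psd_at M i j -> (M i j)^* * M i j <= M i i * M j j.
Proof.
move=> psdM; have [Mii_ge0 Mjj_ge0 Mji] := psd_at_herm psdM.
move: Mii_ge0; rewrite le0r => /orP [/eqP Mii0 | Mii_gt0]; last first.
  rewrite -subr_ge0 -(pmulr_rge0 _ Mii_gt0).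
  have := psdM (- M i j) (M i i); congr (_ <= _).
  by rewrite /qform2 Mji rmorphN (ge0_conjC (ltW Mii_gt0)); ring.
suff -> : M i j = 0 by rewrite Mii0 conjC0 !mul0r.
apply/eqP; apply: contraT => Mij_neq0.
(* as M i i = 0, the form at (-t M i j, 1) is M j j - 2 t |M i j|^2 for real t *)
pose t := (M j j + 1) / ((M i j)^* * M i j).
have := psdM (- (t * M i j)) 1.
have -> : qform2 M i j (- (t * M i j)) 1 = - (M j j + 2).
  rewrite /qform2 Mii0 Mji rmorphN !rmorphM /= fmorphV /= rmorphD rmorphM /=.
  rewrite conjCK !conjC1 (ge0_conjC Mjj_ge0) /t.
  by field; rewrite Mij_neq0 conjC_eq0.
have Mjj2_gt0 : 0 < M j j + 2 by rewrite ltr_wpDl ?ltr0n.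
by rewrite oppr_ge0 => /(lt_le_trans Mjj2_gt0); rewrite ltxx.
Qed.

End Compression2.

Lemma psd_at_tens (S T : finType) (E : op S) (F : op T) a a' b b' :
  psd_at E a a' -> psd_at F b b' -> psd_at (tens E F) (a, b) (a', b').
Proof.
move=> psdE psdF v1 v2; rewrite /qform2 /tens /=; set q := (X in 0 <= X).
have [_ Ea'a'_ge0 _] := psd_at_herm psdE.
have [Fbb_ge0 Fb'b'_ge0 Fb'b] := psd_at_herm psdF.
have detF := psd_at_det psdF.
have v2_ge0 := mul_conjC_ge0 v2.
move: Fbb_ge0; rewrite le0r => /orP [/eqP Fbb0 | Fbb_gt0].
  have Fbb'0 : F b b' = 0.
    apply/eqP; rewrite -mul_conjC_eq0 eq_le mul_conjC_ge0 andbT mulrC.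
    by rewrite Fbb0 mul0r in detF.
  have -> : q = E a' a' * F b' b' * (v2 * v2^*).
    by rewrite /q Fbb0 Fb'b Fbb'0 conjC0; ring.
  by apply: mulr_ge0 => //; apply: mulr_ge0.
(* Schur's trick: F b b * q splits into a value of E's form plus a det(F) term *)
rewrite -(pmulr_rge0 _ Fbb_gt0).
have -> : F b b * q = qform2 E a a' (F b b * v1) (F b b' * v2)
                      + E a' a' * (v2 * v2^*) * (F b b * F b' b' - (F b b')^* * F b b').
  by rewrite /q /qform2 !rmorphM /= (ge0_conjC (ltW Fbb_gt0)) Fb'b; ring.
apply: addr_ge0; first exact: psdE.
by apply: mulr_ge0; [apply: mulr_ge0 | rewrite subr_ge0].
Qed.

Lemma in_1WL_psd_at_ptrans2 (S T Y : finType) (P : Y -> op (S * T)%type) :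
  in_1WL P -> forall y i j, psd_at (ptrans2 (P y)) i j.
Proof.
move=> [X [E [F [[psdE _] [povmF eP]]]]] y i j.
apply: (@eq_psd_at _ _ (fun r s => \sum_x tens (E x) (fun u v => F x y v u) r s)).
  by move=> r s; rewrite /ptrans2 eP.
apply: psd_at_sum => x; case: i j => [a b] [a' b'].
apply: psd_at_tens; first exact: psd_psd_at.
by apply/psd_at_tr/psd_psd_at; case: (povmF x) => psdF _; apply: psdF.
Qed.

Section PrimitiveRoot.

Variables (d : nat) (w : algC).
Hypothesis w_prim : d.-primitive_root w.

Lemma prim_root_mul_conj : w * w^* = 1.
Proof.
have : `|w| ^+ d = 1 by rewrite -normrX (prim_expr_order w_prim) normr1.
move/eqP; rewrite pexpr_eq1 ?(prim_order_gt0 w_prim) // => /eqP w_norm1.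
by rewrite -normCK w_norm1 expr1n.
Qed.

Lemma sum_prim_root_pow (b b' : 'I_d) :
  \sum_(q < d) (w ^+ b * w^* ^+ b') ^+ q = (b == b')%:R * d%:R.
Proof.
have [<- | neq_bb'] := eqVneq b b'.
  rewrite -exprMn prim_root_mul_conj expr1n.
  by under eq_bigr do rewrite expr1n; rewrite sumr_const card_ord mul1r.
rewrite mul0r; set z := w ^+ b * w^* ^+ b'.
have z_root : z ^+ d = 1.
  rewrite /z exprMn -!exprM mulnC exprM (prim_expr_order w_prim) expr1n mul1r.
  by rewrite mulnC exprM -rmorphXn /= (prim_expr_order w_prim) rmorph1 expr1n.
have z_neq1 : z != 1.
  apply: contraNneq neq_bb' => z1.
  have : w ^+ b = w ^+ b' * z.
    by rewrite /z mulrCA -exprMn prim_root_mul_conj expr1n mulr1.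
  by rewrite z1 mulr1 => /eqP; rewrite (eq_prim_root_expr w_prim) !modn_small.
have := subrX1 z d; rewrite z_root subrr => /esym/eqP.
by rewrite mulf_eq0 subr_eq0 (negbTE z_neq1) => /eqP.
Qed.

End PrimitiveRoot.

Lemma idop_pair (S T : finType) (a a' : S) (b b' : T) :
  idop (a, b) (a', b') = idop a a' * idop b b'.
Proof. by rewrite /idop xpair_eqE -natrM mulnb. Qed.

Lemma sum_pair (X Y : finType) (F : X * Y -> algC) :
  \sum_p F p = \sum_x \sum_y F (x, y).
Proof. by rewrite pair_bigA; apply: eq_bigr => -[]. Qed.

Section BellPSD.

Variables (d : nat) (w : algC).

Let c_ge0 : 0 <= (2 * (d ^ 2)%:R : algC)^-1.
Proof. by rewrite invr_ge0 mulr_ge0 ?ler0n. Qed.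

Lemma bell_psd y : psd (bell d w y).
Proof.
by apply: eq_psd (psd_block_rank1 (bell_vec d w y) (fun=> tt)) => r s; rewrite mulr1.
Qed.

Lemma Pbell_psd y : psd (Pbell d w y).
Proof.
apply: psd_conic (bell_psd y) (@psd_idop _) => //.
by rewrite invr_ge0 ler0n.
Qed.

Lemma Gbell_psd y y' : psd (Gbell d w y y').
Proof.
apply: psd_conic => //.
  exact: psd_block_rank1 (fun i => bell_vec d w y i.1) (fun i => i.2).
exact: psd_block_rank1 (fun i => bell_vec d w y' (i.1.1, i.2)) (fun i => i.1.2).
Qed.

Lemma Gbell_swap y y' i j : swapBE (Gbell d w y y') i j = Gbell d w y' y i j.
Proof. by rewrite /swapBE /Gbell /tens /embAE /= addrC. Qed.

End BellPSD.

Section BellBasis.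

Variables (n : nat) (w : algC).
Hypothesis w_prim : (n.+2).-primitive_root w.
Local Notation d := n.+2.
Local Notation c := (2 * (d ^ 2)%:R : algC)^-1.

Let d_neq0 : d%:R != 0 :> algC. Proof. by rewrite pnatr_eq0. Qed.

Lemma bell_eq y r s :
  bell d w y r s = (y.1 == r.1 - r.2)%:R * (y.1 == s.1 - s.2)%:R
                   * (w ^+ r.2 * w^* ^+ s.2) ^+ y.2 / d%:R.
Proof.
have shift_eq (a b p : 'I_d) : ((a : nat) == (b + p) %% d)%N = (p == a - b).
  by rewrite [RHS]eq_sym subr_eq addrC.
rewrite /bell /bell_vec !shift_eq !rmorphM /= fmorphV /= rmorphXn /= !conjC_nat.
have sqrt_ge0 : 0 <= sqrtC d%:R :> algC by rewrite sqrtC_ge0 ler0n.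
rewrite (ge0_conjC sqrt_ge0) exprMn -!exprM ![(_ * y.2)%N]mulnC.
have sqrt_sq : sqrtC d%:R * sqrtC d%:R = d%:R :> algC by rewrite -expr2 sqrtCK.
have sqrt_neq0 : sqrtC d%:R != 0 :> algC by rewrite sqrtC_eq0.
by move: sqrt_sq sqrt_neq0; set t := sqrtC _ => <- t_neq0; field.
Qed.

Lemma bell_complete r s : \sum_y bell d w y r s = idop r s.
Proof.
transitivity (\sum_(p < d) (p == r.1 - r.2)%:R * (p == s.1 - s.2)%:R / d%:R
                           * \sum_(q < d) (w ^+ r.2 * w^* ^+ s.2) ^+ q).
  rewrite sum_pair; apply: eq_bigr => p _; rewrite mulr_sumr.
  by apply: eq_bigr => q _; rewrite bell_eq /=; ring.
case: r s => [r1 r2] [s1 s2]; rewrite sum_prim_root_pow // idop_pair /idop /=.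
have [<- | neq_r2s2] := eqVneq r2 s2; last first.
  by rewrite mulr0 big1 // => p _; rewrite mul0r mulr0.
under eq_bigr do rewrite mul1r divfK //.
by rewrite sum_delta_mull (inj_eq (addIr _)) mulr1.
Qed.

Lemma sum_const_pair (x : algC) : \sum_(y : 'I_d * 'I_d) x = x * (d ^ 2)%:R.
Proof. by rewrite sumr_const card_prod card_ord mulnn mulr_natr. Qed.

Lemma mul_c_sq : c * (d ^ 2)%:R = 2^-1.
Proof. by rewrite invfM -mulrA mulVf ?mulr1 // pnatr_eq0 expn_eq0. Qed.

Lemma sum_bell_mul r s (k m : algC) :
  \sum_y k * (bell d w y r s * m) = k * (idop r s * m).
Proof. by rewrite -mulr_sumr -mulr_suml bell_complete. Qed.

Lemma Pbell_POVM : is_POVM (Pbell d w).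
Proof.
split=> [|r s]; first exact: Pbell_psd.
rewrite /Pbell big_split /= -mulr_sumr bell_complete -mulr_suml sum_const_pair.
by rewrite mul_c_sq -mulrDl; field.
Qed.

Lemma Gbell_POVM :
  is_POVM (fun yy : ('I_d * 'I_d) * ('I_d * 'I_d) => Gbell d w yy.1 yy.2).
Proof.
split=> [yy | [[a b] e] [[a' b'] e']]; first exact: Gbell_psd.
rewrite sum_pair /Gbell /tens /embAE /=.
under eq_bigr do rewrite big_split /= sum_const_pair sum_bell_mul.
rewrite big_split /= -!mulr_suml sum_bell_mul sum_const_pair !idop_pair.
transitivity (c * (d ^ 2)%:R * 2 * (idop a a' * idop b b' * idop e e')); first ring.
by rewrite mul_c_sq; field.
Qed.

Lemma Gbell_marg y i j :
  \sum_y' Gbell d w y y' i j = tens (Pbell d w y) (@idop 'I_d) i j.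
Proof.
case: i j => [[a b] e] [[a' b'] e']; rewrite /Gbell /tens /embAE /Pbell /=.
rewrite big_split /= sum_const_pair sum_bell_mul !idop_pair.
transitivity (c * (d ^ 2)%:R * (bell d w y (a, b) (a', b') * idop e e')
              + c * (idop a a' * idop b b' * idop e e')); first ring.
by rewrite mul_c_sq; ring.
Qed.

Lemma Pbell_ptrans2_qform2 (p q : 'I_d) :
  qform2 (ptrans2 (Pbell d w (p, q))) (1 + p, 0) (p, 1) 1 (- (w ^+ q)^*)
  = (d%:R ^+ 2)^-1 - d%:R^-1.
Proof.
have neq_1p_p : (p == 1 + p - 0) = false.
  by rewrite subr0 eq_sym -subr_eq0 -addrA subrr addr0 oner_eq0.
have neq_p_p1 : (p == p - 1) = false.
  by rewrite -subr_eq0 opprB addrC subrK oner_eq0.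
have eq_p_1p1 : (p == 1 + p - 1) by rewrite addrAC subrr add0r.
have neq_10 : ((1 : 'I_d) == 0) = false by rewrite oner_eq0.
rewrite /qform2 /ptrans2 /Pbell /= !bell_eq /= neq_1p_p neq_p_p1 eq_p_1p1 subr0 eqxx.
rewrite /idop !xpair_eqE /= [0 == 1]eq_sym neq_10 !andbF !eqxx modn_small //=.
rewrite rmorphN !rmorphXn /= conjCK conjC1 !expr0 !expr1.
rewrite !(mulr1, mul1r, mulr0, mul0r, addr0, add0r).
rewrite -rmorphXn /=; set u := w ^+ q.
have uu : u * u^* = 1 by rewrite rmorphXn -exprMn (prim_root_mul_conj w_prim) expr1n.
transitivity (c + c * (u * u^*) - (u * u^*) / d%:R).
  by field; rewrite -natrD pnatr_eq0.
move: uu; set k := u * u^* => ->.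
by rewrite natrX; field; rewrite -natrD pnatr_eq0.
Qed.

Lemma Pbell_ptrans2_not_psd_at y :
  ~ psd_at (ptrans2 (Pbell d w y)) (1 + y.1, 0) (y.1, 1).
Proof.
case: y => p q /(_ 1 (- (w ^+ q)^*)); rewrite Pbell_ptrans2_qform2 => /= form_ge0.
have form_lt0 : (d%:R ^+ 2)^-1 - d%:R^-1 < 0 :> algC.
  have -> : (d%:R ^+ 2)^-1 - d%:R^-1 = (1 - d%:R) / d%:R ^+ 2 :> algC.
    by field; rewrite -natrD pnatr_eq0.
  by rewrite pmulr_llt0 ?invr_gt0 ?exprn_gt0 ?ltr0n // subr_lt0 ltr1n.
by have := lt_le_trans form_lt0 form_ge0; rewrite ltxx.
Qed.
End BellBasis.

Unset Implicit Arguments.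

Theorem mainTheorem5 (d : nat) (hd : (2 <= d)%N) (w : algC)
    (hw : d.-primitive_root w) :
  is_POVM (Pbell d w) /\
  two_extension (Pbell d w) (Gbell d w) /\
  two_extendible (Pbell d w) /\
  (forall y, ~ psd (ptrans2 (Pbell d w y))) /\
  ~ in_1WL (Pbell d w).
Proof.
case: d hd w hw => [|[|n]] // _ w w_prim.
have Gext : two_extension (Pbell n.+2 w) (Gbell n.+2 w).
  split; first exact: Gbell_POVM.
  by split; [exact: Gbell_marg | exact: Gbell_swap].
split; first exact: Pbell_POVM.
split; first exact: Gext.
split; first by exists (Gbell n.+2 w).
split=> [y /(psd_psd_at (1 + y.1, 0) (y.1, 1)) | /in_1WL_psd_at_ptrans2 ptrans2_psd_at].
  exact: Pbell_ptrans2_not_psd_at.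
exact: (Pbell_ptrans2_not_psd_at w_prim (ptrans2_psd_at (0, 0) _ _)).
Qed.
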